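(* Let $\delta$ be $\mathfrak l_m$-dominant integral, $k\ge k'$ non-negative integers, $K\in\kappa(\delta,k)$, $K'\in\kappa(\delta,k')$, $K\ne K'$, and suppose $\chi_{\delta+\lambda_K}=\chi_{\delta+\lambda_{K'}}$ (so that $i:=i(\delta,k)$ is defined). Then there exists an $\mathfrak a_m$-dominant $\mathfrak a_m$-integral weight $\mu$ such that $\delta+\lambda_K=\mu[i-1]$ and $\delta+\lambda_{K'}=\mu[i]$.
   Context: $\mathfrak a_m\cong\mathfrak{sl}_{m+1}$ is the projective subalgebra $\mathrm{Span}\{\partial_{x_i},x_j\partial_{x_i},x_j\sum_rx_r\partial_{x_r}\}$ of polynomial vector fields on $\mathbb R^m$, with Cartan subalgebra $\mathfrak h_m=\mathrm{Span}\{x_i\partial_{x_i}\}$. Weights: $\mathfrak h_m^*=\{\lambda=\sum_{i=0}^m\lambda_i\epsilon_i:\sum\lambda_i=0\}$ with $\lambda(x_j\partial_{x_j})=\lambda_j$ ($1\le j\le m$). $\lambda$ is $\mathfrak a_m$-dominant integral if $\lambda_i-\lambda_{i+1}\in\mathbb N$ for $0\le i<m$, and $\mathfrak l_m$-dominant integral if this holds for $1\le i<m$. Let $\rho=\sum_{i=0}^m(\tfrac m2-i)\epsilon_i$; $S_{m+1}$ permutes indices $0,\dots,m$, $w\cdot\lambda=w(\lambda+\rho)-\rho$; $\chi_\lambda$ is the $\mathfrak a_m$-infinitesimal character attached to $\lambda$, with $\chi_\lambda=\chi_{\lambda'}$ iff $\lambda'\in S_{m+1}\cdot\lambda$. For $\mu\in\mathfrak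 h_m^*$, $\mu[0]=\mu$ and for $1\le i\le m$, $\mu[i]=w_i\cdot\mu$ where, writing $\sigma=\mu+\rho$, $\mu[i]+\rho=(\sigma_i,\sigma_0,\sigma_1,\dots,\sigma_{i-1},\sigma_{i+1},\dots,\sigma_m)$. For $K\in\mathbb N^m$: $|K|=\sum K_i$, $\lambda_K=|K|\epsilon_0-\sum_{i=1}^mK_i\epsilon_i$, $\kappa(\delta,k)=\{K\in\mathbb N^m:|K|=k,\ K_i\le\delta_i-\delta_{i+1}\text{ for }i<m\}$. For $\delta$: $i(\delta)\in\{1,\dots,m\}$ maximal with $\delta_1=\cdots=\delta_{i(\delta)}$; $\tilde\delta_i=\delta_i-i-\delta_0$; $\delta$ is resonant if $\tilde\delta_{i(\delta)}\in\mathbb Z^+$; for $\delta$ resonant, $k\in\mathbb Z^+$, $\tilde\delta_{i(\delta)}\ge k$, $i(\delta,k)\in\{i(\delta),\dots,m\}$ is maximal with $\tilde\delta_{i(\delta,k)}\ge k$. *)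

From HB Require Import structures.
From mathcomp Require Import all_boot all_order all_algebra all_fingroup.
Set Implicit Arguments. Unset Strict Implicit. Unset Printing Implicit Defensive.
Import Order.TTheory GRing.Theory Num.Theory.
Local Open Scope ring_scope.

(* Weights of a_m = sl_(m+1): lambda = sum_{i=0}^m lambda_i eps_i, represented
   by the coefficient vector lambda : 'I_(m+1) -> R, R a numeric closed field
   (e.g. the complex numbers); the constraint sum lambda_i = 0 is [is_weight]. *)
Definition weight (R : numClosedFieldType) (m : nat) := {ffun 'I_m.+1 -> R}.

Section Defs.
Variables (R : numClosedFieldType) (m : nat).
Implicit Types (lam mu del : weight R m).

Definition is_weight lam : Prop := \sum_(i < m.+1) lam i = 0.

Definition co lam (i : nat) : R := lam (inord i).

Definition isN (x : R) : Prop := exists n : nat, x = n%:R.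
Definition isZpos (x : R) : Prop := exists n : nat, x = n.+1%:R.

Definition rho : weight R m := [ffun i : 'I_m.+1 => m%:R / 2 - (i : nat)%:R].

Definition a_dom_int lam : Prop := forall i : nat, (i < m)%N -> isN (co lam i - co lam i.+1).
Definition l_dom_int lam : Prop :=
  forall i : nat, (0 < i)%N -> (i < m)%N -> isN (co lam i - co lam i.+1).

Definition dot (w : 'S_m.+1) lam : weight R m :=
  [ffun j : 'I_m.+1 => lam (w j) + rho (w j) - rho j].

(* chi_lam = chi_lam'  iff  lam' in S_(m+1) . lam *)
Definition same_infchar lam lam' : Prop := exists w : 'S_m.+1, lam' = dot w lam.

(* mu[i]: mu[i] + rho = (s_i, s_0, ..., s_(i-1), s_(i+1), ..., s_m), s = mu + rho *)
Definition shift mu (i : nat) : weight R m :=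
  [ffun j : 'I_m.+1 =>
     let s t := co mu t + co rho t in
     (if (j : nat) == 0%N then s i else if (j <= i)%N then s (j : nat).-1 else s j)
     - rho j].

(* K in N^m, K = (K_1, ..., K_m) stored as a tuple, K_i = nth 0 K (i-1) *)
Definition Kc (K : m.-tuple nat) (i : nat) : nat := nth 0%N K i.-1.

Definition lamK (K : m.-tuple nat) : weight R m :=
  [ffun j : 'I_m.+1 => if (j : nat) == 0%N then (sumn K)%:R else - (Kc K j)%:R].

Definition in_kappa del (k : nat) (K : m.-tuple nat) : Prop :=
  sumn K = k /\
  forall i : nat, (0 < i)%N -> (i < m)%N -> (Kc K i)%:R <= co del i - co del i.+1.

Definition i_del del : nat :=
  \max_(i < m.+1 | (0 < i)%N &&
        [forall j : 'I_m.+1, ((0 < j)%N && (j <= i)%N) ==> (del j == co del 1)]) i.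

Definition tilde del (i : nat) : R := co del i - i%:R - co del 0.

Definition resonant del : Prop := isZpos (tilde del (i_del del)).

(* i(del,k): maximal i in {i(del), ..., m} with tilde del_i >= k
   (meaningful when del resonant, k in Z^+, tilde del_(i(del)) >= k) *)
Definition i_delk del (k : nat) : nat :=
  \max_(i < m.+1 | (i_del del <= i)%N && (k%:R <= tilde del i)) i.

End Defs.

From HB Require Import structures.
From mathcomp Require Import all_boot all_order all_algebra all_fingroup.
From mathcomp Require Import ring zify.
Import Order.TTheory GRing.Theory Num.Theory.
Set Implicit Arguments. Unset Strict Implicit. Unset Printing Implicit Defensive.
Local Open Scope ring_scope.

(* Write A := delta + lambda_K + rho and B := delta + lambda_K' + rho.  The
   coordinates delta_t - K_t - t (t >= 1) of A - m/2 strictly decrease, and the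
   kappa bounds K_s <= delta_s - delta_(s+1) make them interlace with those of
   B: a coordinate t >= 1 of A can only equal coordinate t of B.  Hence the
   permutation w with B = A o w fixes every t >= 1 except one index q, where
   K_q <> K'_q, and w is the transposition (0 q).  Reading off B_q = A_0 and
   B_0 = A_q gives tilde delta_q = k + K'_q = k' + K_q, so k' < k, q = i(delta,k)
   and delta is resonant.  Finally mu + rho is A with its 0-th coordinate moved
   to position q - 1; A = mu[q-1], B = mu[q] because the cycle defining mu[q] is
   the one defining mu[q-1] composed with (0 q), and dominance of mu comes from
   the kappa bounds again together with k' < k. *)

Lemma eq_tperm_ord0 (T : Type) (n : nat) (w : 'S_n.+1) (a b : 'I_n.+1 -> T)
    (q : 'I_n.+1) :
  (forall j, b j = a (w j)) ->
  (forall x y, x != ord0 -> y != ord0 -> a x = b y -> x = y) ->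
  q != ord0 -> a q <> b q -> w = tperm ord0 q.
Proof.
move=> hab hinj q0 aqbq.
have wfix t : t != ord0 -> w t != ord0 -> w t = t.
  by move=> t0 wt0; apply: hinj; rewrite ?hab.
have wq : w q = ord0.
  by apply/eqP; apply: contraT => wq0; case: aqbq; rewrite hab wfix.
have w0 : w ord0 = q.
  apply/eqP; apply: contraT => w0q.
  have w00 : w ord0 != ord0 by rewrite -[X in _ != X]wq (inj_eq perm_inj) eq_sym.
  have ww0 : w (w ord0) != ord0 by rewrite -[X in _ != X]wq (inj_eq perm_inj).
  by move: (perm_inj (wfix _ w00 ww0)) => /eqP; rewrite (negbTE w00).
apply/permP => t.
have [->|t0] := eqVneq t ord0; first by rewrite tpermL.
have [->|tq] := eqVneq t q; first by rewrite tpermR.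
rewrite tpermD 1?eq_sym //; apply: wfix => //.
by rewrite -[X in _ != X]wq (inj_eq perm_inj).
Qed.

(* mu[i] + rho = (mu + rho) o shift_index i, the cycle (0 i i-1 ... 1) on indices. *)
Definition shift_index (i j : nat) : nat :=
  if j == 0%N then i else if (j <= i)%N then j.-1 else j.

Definition unshift_index (i j : nat) : nat :=
  if (j < i)%N then j.+1 else if j == i then 0%N else j.

Lemma shift_indexK (i : nat) : cancel (shift_index i) (unshift_index i).
Proof.
move=> j; rewrite /shift_index; case: j => [|j] /=.
  by rewrite /unshift_index ltnn eqxx.
by case: ltnP => ji; rewrite /unshift_index; [rewrite ji | rewrite ltnNge leqW // gtn_eqF].
Qed.

Lemma unshift_index_lt (i j : nat) : (j < i)%N -> unshift_index i j = j.+1.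
Proof. by rewrite /unshift_index => ->. Qed.

Lemma unshift_index_id (i : nat) : unshift_index i i = 0%N.
Proof. by rewrite /unshift_index ltnn eqxx. Qed.

Lemma unshift_index_gt (i j : nat) : (i < j)%N -> unshift_index i j = j.
Proof. by move=> ij; rewrite /unshift_index ltnNge (ltnW ij) gtn_eqF. Qed.

Lemma shift_index_leq (m i j : nat) :
  (i <= m)%N -> (j <= m)%N -> (shift_index i j <= m)%N.
Proof. by rewrite /shift_index; case: eqP => // _; case: ifP => //; lia. Qed.

Lemma shift_index_tperm (n : nat) (q j : 'I_n.+1) : (0 < q)%N ->
  shift_index q j = shift_index q.-1 (tperm ord0 q j).
Proof.
move=> q0; case: tpermP => [->|->|j0 jq]; rewrite /shift_index /=;
  try by do !case: ifP; lia.
have {j0}j0 : (j : nat) <> 0%N by move=> h; apply: j0; apply: val_inj.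
have {jq}jq : (j : nat) <> q by move=> h; apply: jq; apply: val_inj.
by do !case: ifP; lia.
Qed.

Lemma sum_shift_index (V : nmodType) (m i : nat) (F : nat -> V) :
  (i <= m)%N -> \sum_(j < m.+1) F (shift_index i j) = \sum_(j < m.+1) F j.
Proof.
move=> im.
pose h (j : 'I_m.+1) : 'I_m.+1 := inord (shift_index i j).
have hE j : h j = shift_index i j :> nat.
  by rewrite inordK // ltnS shift_index_leq ?leq_ord.
have h_inj : injective h.
  move=> x y /(congr1 (@nat_of_ord _)); rewrite !hE.
  by move=> /(can_inj (shift_indexK i))/val_inj.
by rewrite [RHS](reindex_inj h_inj); apply: eq_bigr => j _; rewrite hE.
Qed.

Section Weights.
Variables (R : numClosedFieldType) (m : nat).
Implicit Types (lam mu del : weight R m) (K : m.-tuple nat).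

Definition lrho lam (t : nat) : R := co lam t + co (rho R m) t.

Lemma co_ord lam (j : 'I_m.+1) : co lam j = lam j.
Proof. by rewrite /co inord_val. Qed.

Lemma lrho_ord lam (j : 'I_m.+1) : lrho lam j = lam j + rho R m j.
Proof. by rewrite /lrho !co_ord. Qed.

Lemma weightP lam lam' :
  (forall j : 'I_m.+1, lrho lam j = lrho lam' j) -> lam = lam'.
Proof. by move=> h; apply/ffunP => j; move: (h j); rewrite !lrho_ord => /addIr. Qed.

Lemma co_rho (t : nat) : (t <= m)%N -> co (rho R m) t = m%:R / 2 - t%:R.
Proof. by move=> tm; rewrite /co ffunE inordK. Qed.

Lemma co_sub_lrho lam (t : nat) : (t < m)%N ->
  co lam t - co lam t.+1 = lrho lam t - lrho lam t.+1 - 1.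
Proof. by move=> tm; rewrite /lrho !co_rho // ?(ltnW tm) // -addn1 natrD; ring. Qed.

Lemma lrho_dot (w : 'S_m.+1) lam (j : 'I_m.+1) : lrho (dot w lam) j = lrho lam (w j).
Proof. by rewrite !lrho_ord ffunE subrK. Qed.

Lemma sum_lamK K : \sum_(j < m.+1) lamK R K j = 0.
Proof.
rewrite big_ord_recl !ffunE /=.
under eq_bigr => i _ do rewrite ffunE /= /Kc /=.
rewrite sumrN -natr_sum sumnE big_tuple.
have -> : \sum_(i < m) nth 0%N K (0 + i) = \sum_(i < m) tnth K i.
  by apply: eq_bigr => i _; rewrite (tnth_nth 0%N).
by rewrite subrr.
Qed.

Lemma is_weight_addlamK del K : is_weight del -> is_weight (del + lamK R K).
Proof.
rewrite /is_weight => hdel; under eq_bigr do rewrite ffunE.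
by rewrite big_split /= hdel sum_lamK addr0.
Qed.

Lemma lrho_lamK del K (t : nat) : (0 < t <= m)%N ->
  lrho (del + lamK R K) t = co del t - (Kc K t)%:R - t%:R + m%:R / 2.
Proof.
case: t => // t /= tm; rewrite /lrho co_rho // /co !ffunE inordK //=; ring.
Qed.

Lemma lrho_lamK0 del K : lrho (del + lamK R K) 0 = co del 0 + (sumn K)%:R + m%:R / 2.
Proof. by rewrite /lrho co_rho // /co !ffunE inordK //= subr0. Qed.

Lemma lrho_lamK_eq del K K' (t : nat) : (0 < t <= m)%N ->
  lrho (del + lamK R K) t = lrho (del + lamK R K') t -> Kc K t = Kc K' t.
Proof.
move=> tm; rewrite !lrho_lamK // => /addIr/addIr/addrI/oppr_inj/eqP.
by rewrite eqr_nat => /eqP.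
Qed.

Lemma exists_Kc_neq K K' : K <> K' -> exists2 q : 'I_m.+1, q != ord0 & Kc K q != Kc K' q.
Proof.
move=> neqK; case: (pickP (fun q : 'I_m.+1 => (q != ord0) && (Kc K q != Kc K' q))).
  by move=> q /andP[]; exists q.
move=> noq; case: neqK; apply: eq_from_tnth => i; rewrite !(tnth_nth 0%N).
by move: (noq (lift ord0 i)); rewrite eq_sym neq_lift /= /Kc => /negbFE/eqP.
Qed.

Lemma shiftE mu (i : nat) (j : 'I_m.+1) :
  shift mu i j = lrho mu (shift_index i j) - rho R m j.
Proof. by rewrite ffunE /shift_index /lrho; case: eqP => //; case: ifP. Qed.

Lemma lrho_shift mu (i : nat) (j : 'I_m.+1) :
  lrho (shift mu i) j = lrho mu (shift_index i j).
Proof. by rewrite lrho_ord shiftE subrK. Qed.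

Lemma sum_shift mu (i : nat) : (i <= m)%N ->
  \sum_(j < m.+1) shift mu i j = \sum_(j < m.+1) mu j.
Proof.
move=> im; under eq_bigr do rewrite shiftE.
rewrite sumrB (@sum_shift_index _ _ _ (lrho mu)) // -sumrB.
by apply: eq_bigr => j _; rewrite lrho_ord addrK.
Qed.

Lemma lrho_shiftS mu (q j : 'I_m.+1) : (0 < q)%N ->
  lrho (shift mu q) j = lrho (shift mu q.-1) (tperm ord0 q j).
Proof. by move=> q0; rewrite !lrho_shift shift_index_tperm. Qed.

Definition unshift lam (i : nat) : weight R m :=
  [ffun j : 'I_m.+1 => lrho lam (unshift_index i j) - rho R m j].

Lemma lrho_unshift lam (i t : nat) : (t <= m)%N ->
  lrho (unshift lam i) t = lrho lam (unshift_index i t).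
Proof. by move=> tm; rewrite /lrho /co ffunE inordK // subrK. Qed.

Lemma unshiftK lam (i : nat) : (i <= m)%N -> shift (unshift lam i) i = lam.
Proof.
move=> im; apply: weightP => j.
by rewrite lrho_shift lrho_unshift ?shift_index_leq ?leq_ord // shift_indexK.
Qed.

Lemma i_del_gt0 del : (0 < m)%N -> (0 < i_del del)%N.
Proof.
move=> m0; apply: leq_trans (leq_bigmax_cond (inord 1) _); rewrite inordK ?ltnS //=.
apply/forallP => j; apply/implyP => j1.
by rewrite (_ : j = inord 1) ?eqxx //; apply: val_inj; rewrite /= inordK ?ltnS //; lia.
Qed.

Lemma i_del_leq del (q : nat) : (0 < q <= m)%N ->
  ((q < m)%N -> co del q != co del q.+1) -> (i_del del <= q)%N.
Proof.
move=> /andP[q0 qm] hq; apply/bigmax_leqP => i /andP[_ /forallP hi].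
rewrite leqNgt; apply/negP => qi.
have const j : (0 < j <= i)%N -> co del j = co del 1.
  move=> /andP[j0 ji]; have jm : (j < m.+1)%N by rewrite ltnS (leq_trans ji (leq_ord i)).
  by move: (hi (inord j)); rewrite inordK // j0 ji => /eqP.
have qm' : (q < m)%N by apply: leq_trans qi (leq_ord i).
by move/eqP: (hq qm'); rewrite !const //; lia.
Qed.

Lemma i_delk_eq del (k q : nat) :
  (i_del del <= q <= m)%N -> k%:R <= tilde del q ->
  (forall i, (q < i <= m)%N -> ~~ (k%:R <= tilde del i)) -> i_delk del k = q.
Proof.
move=> /andP[iq qm] hkq hgt; apply/eqP; rewrite eqn_leq; apply/andP; split.
  apply/bigmax_leqP => i /andP[_ hki]; rewrite leqNgt; apply/negP => qi.
  by move: (hgt i); rewrite qi leq_ord hki => /(_ isT).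
by apply: leq_trans (leq_bigmax_cond (inord q) _); rewrite inordK ?ltnS // iq hkq.
Qed.

Section Kappa.
Variable del : weight R m.
Hypothesis hl : l_dom_int del.

Lemma l_dom_int_diff (s t : nat) : (0 < s)%N -> (s <= t)%N -> (t <= m)%N ->
  exists n : nat, co del s - co del t = n%:R.
Proof.
move=> s0; elim: t => [|t IH]; first by rewrite leqn0 => /eqP s00; rewrite s00 in s0.
rewrite leq_eqVlt => /orP[/eqP <- _|st tm]; first by exists 0%N; rewrite subrr.
have [N hN] := IH st (ltnW tm); have [e he] := hl (leq_trans s0 st) tm.
by exists (N + e)%N; rewrite natrD -hN -he; ring.
Qed.

Lemma kappa_diff (k : nat) K (s t : nat) : in_kappa del k K ->
  (0 < s)%N -> (s < t)%N -> (t <= m)%N ->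
  exists n : nat, co del s - co del t = (Kc K s + n)%:R.
Proof.
move=> [_ hK] s0 st tm; have sm : (s < m)%N by apply: leq_trans st tm.
have [e he] := hl s0 sm; move: (hK s s0 sm); rewrite he ler_nat => Ke.
have [N hN] := l_dom_int_diff (ltn0Sn s) st tm.
by exists (e - Kc K s + N)%N; rewrite addnA subnKC // natrD -he -hN; ring.
Qed.

Lemma lrho_lamK_step (k : nat) K K' (t : nat) : in_kappa del k K ->
  (0 < t)%N -> (t < m)%N ->
  isN (lrho (del + lamK R K) t - lrho (del + lamK R K') t.+1 - 1).
Proof.
move=> hK t0 tm; have [n hn] := kappa_diff hK t0 (ltnSn t) tm.
exists (n + Kc K' t.+1)%N; rewrite !lrho_lamK ?t0 ?(ltnW tm) //.
move/eqP: hn; rewrite subr_eq => /eqP ->; rewrite !natrD -addn1 natrD; ring.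
Qed.

Lemma lrho_lamK_neq (k : nat) K K' (s t : nat) : in_kappa del k K ->
  (0 < s)%N -> (s < t)%N -> (t <= m)%N ->
  lrho (del + lamK R K) s != lrho (del + lamK R K') t.
Proof.
move=> hK s0 st tm; have [n hn] := kappa_diff hK s0 st tm.
have h : lrho (del + lamK R K) s - lrho (del + lamK R K') t
         = (n + Kc K' t + (t - s))%:R.
  rewrite !lrho_lamK ?s0 ?(leq_trans s0 (ltnW st)) ?(ltnW (leq_trans st tm)) //.
  move/eqP: hn; rewrite subr_eq => /eqP ->; rewrite !natrD natrB ?(ltnW st) //; ring.
by rewrite -subr_eq0 h pnatr_eq0; lia.
Qed.

Lemma lrho_lamK_inj (k k' : nat) K K' (x y : nat) :
  in_kappa del k K -> in_kappa del k' K' -> (0 < x <= m)%N -> (0 < y <= m)%N ->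
  lrho (del + lamK R K) x = lrho (del + lamK R K') y -> x = y.
Proof.
move=> hK hK' /andP[x0 xm] /andP[y0 ym] hxy.
case: (ltngtP x y) => // [xy|yx].
  by move: (lrho_lamK_neq K' hK x0 xy ym); rewrite hxy eqxx.
by move: (lrho_lamK_neq K hK' y0 yx xm); rewrite hxy eqxx.
Qed.

Lemma tilde_sub (s t : nat) : (s <= t)%N ->
  tilde del s - tilde del t = co del s - co del t + (t - s)%:R.
Proof. by move=> st; rewrite /tilde natrB //; ring. Qed.

Lemma lrho_lamK_sub0 K K' (t : nat) : (0 < t <= m)%N ->
  lrho (del + lamK R K) t - lrho (del + lamK R K') 0
  = tilde del t - (Kc K t + sumn K')%:R.
Proof. by move=> tm; rewrite lrho_lamK // lrho_lamK0 /tilde natrD; ring. Qed.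

End Kappa.

Section Transposition.
Variables (del : weight R m) (k k' : nat) (K K' : m.-tuple nat) (q : nat).
Hypotheses (hl : l_dom_int del) (hK : in_kappa del k K) (hK' : in_kappa del k' K').
Hypotheses (hq : (0 < q <= m)%N) (neqKq : Kc K q != Kc K' q) (lek : (k' <= k)%N).
Hypothesis hBA : lrho (del + lamK R K') q = lrho (del + lamK R K) 0.
Hypothesis hAB : lrho (del + lamK R K) q = lrho (del + lamK R K') 0.

Let q0 : (0 < q)%N := proj1 (andP hq).
Let qm : (q <= m)%N := proj2 (andP hq).

Lemma tilde_q' : tilde del q = (Kc K' q + k)%:R.
Proof.
by apply/eqP; rewrite -subr_eq0 -(proj1 hK) -(lrho_lamK_sub0 del K' K hq) hBA subrr.
Qed.

Lemma tilde_q : tilde del q = (Kc K q + k')%:R.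
Proof.
by apply/eqP; rewrite -subr_eq0 -(proj1 hK') -(lrho_lamK_sub0 del K K' hq) hAB subrr.
Qed.

Lemma ltn_k'k : (k' < k)%N.
Proof.
have /eqP : (Kc K' q + k)%:R = (Kc K q + k')%:R :> R by rewrite -tilde_q -tilde_q'.
by rewrite eqr_nat => /eqP; move: neqKq lek; lia.
Qed.

Lemma i_del_leq_q : (i_del del <= q)%N.
Proof.
apply: i_del_leq => // qm'; apply: contraNneq neqKq => hdel.
move: (proj2 hK q q0 qm') (proj2 hK' q q0 qm').
by rewrite hdel subrr !lern0 => /eqP -> /eqP ->.
Qed.

Lemma tilde_i_del : exists n : nat, tilde del (i_del del) = (Kc K' q + k + n)%:R.
Proof.
have id0 : (0 < i_del del)%N by apply: i_del_gt0; lia.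
have [n hn] := l_dom_int_diff hl id0 i_del_leq_q qm.
exists (n + (q - i_del del))%N; move/eqP: (tilde_sub del i_del_leq_q).
by rewrite subr_eq tilde_q' hn => /eqP ->; rewrite !natrD; ring.
Qed.

Lemma i_delk_q : i_delk del k = q.
Proof.
apply: i_delk_eq; first by rewrite i_del_leq_q.
  by rewrite tilde_q' ler_nat leq_addl.
move=> i /andP[qi im] /=; apply/negP => hki.
have [n hn] := kappa_diff hl hK' q0 qi im.
move/eqP: (tilde_sub del (ltnW qi)); rewrite subr_eq addrC -subr_eq => /eqP hti.
by move: hki; rewrite -hti tilde_q' hn lerBrDr -!natrD ler_nat; lia.
Qed.

Lemma a_dom_int_unshift : a_dom_int (unshift (del + lamK R K) q.-1).
Proof.
move=> j jm; rewrite co_sub_lrho // !lrho_unshift ?(ltnW jm) //.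
case: (ltngtP j q.-1) => [jq|qj|->].
- rewrite unshift_index_lt //; case: (ltngtP j.+1 q.-1) => [jq'|qj'|jq'].
  + by rewrite unshift_index_lt //; apply: (lrho_lamK_step hl _ hK); lia.
  + by lia.
  + rewrite jq' unshift_index_id -hBA -{2}(prednK q0).
    by apply: (lrho_lamK_step hl _ hK); lia.
- rewrite !unshift_index_gt //; last by lia.
  by apply: (lrho_lamK_step hl _ hK); lia.
- rewrite unshift_index_id prednK // unshift_index_gt ?ltn_predL //.
  rewrite hAB !lrho_lamK0 (proj1 hK) (proj1 hK').
  by exists (k - k'.+1)%N; rewrite natrB ?ltn_k'k // -addn1 natrD; ring.
Qed.

End Transposition.

End Weights.

Theorem mainTheorem12 (R : numClosedFieldType) (m : nat) (hm : (0 < m)%N)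
  (del : weight R m) (k k' : nat) (K K' : m.-tuple nat) :
  is_weight del -> l_dom_int del ->
  (k' <= k)%N -> in_kappa del k K -> in_kappa del k' K' -> K <> K' ->
  same_infchar (del + lamK R K) (del + lamK R K') ->
  [/\ resonant del, (0 < k)%N, k%:R <= tilde del (i_del del) &
      exists mu : weight R m,
        [/\ is_weight mu, a_dom_int mu,
            del + lamK R K = shift mu (i_delk del k).-1 &
            del + lamK R K' = shift mu (i_delk del k)]].
Proof.
move=> hw hl lek hK hK' neqK [w hdot].
have [q q0 neqKq] := exists_Kc_neq neqK.
have hq : (0 < q <= m)%N by rewrite lt0n leq_ord andbT.
have hwq : w = tperm ord0 q.
  apply: (@eq_tperm_ord0 _ _ _ (lrho (del + lamK R K)) (lrho (del + lamK R K'))) => //.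
  - by move=> j; rewrite hdot lrho_dot.
  - move=> x y x0 y0 /(lrho_lamK_inj hl hK hK'); rewrite !lt0n x0 y0 !leq_ord.
    by move=> /(_ isT isT)/val_inj.
  - by move/(lrho_lamK_eq hq)/eqP; apply/negP.
have hBA : lrho (del + lamK R K') q = lrho (del + lamK R K) 0.
  by rewrite hdot lrho_dot hwq tpermR.
have hAB : lrho (del + lamK R K) q = lrho (del + lamK R K') 0.
  by rewrite hdot (lrho_dot _ _ ord0) hwq tpermL.
have q'm : (q.-1 <= m)%N by rewrite (leq_trans (leq_pred q)) ?leq_ord.
have [n hn] := tilde_i_del hl hK hK' hq neqKq lek hBA.
have ltk := ltn_k'k hK hK' hq neqKq lek hBA hAB.
split.
- by exists (Kc K' q + k.-1 + n)%N; rewrite hn; congr (_%:R); lia.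
- by lia.
- by rewrite hn ler_nat; lia.
rewrite (i_delk_q hl hK hK' hq neqKq lek hBA).
exists (unshift (del + lamK R K) q.-1); split.
- by rewrite /is_weight -(sum_shift _ q'm) unshiftK //; apply: is_weight_addlamK.
- exact: a_dom_int_unshift hl hK hK' hq neqKq lek hBA hAB.
- by rewrite unshiftK.
- apply: weightP => j; rewrite lrho_shiftS ?lt0n // unshiftK //.
  by rewrite hdot lrho_dot hwq.
Qed.
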